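(* Let a lattice $\Lambda\subset\mathbb R^3$ have Voronoi type $V_1$, i.e. its Voronoi domain is a truncated octahedron. Then: (a) up to reordering of vectors, $\Lambda$ has exactly two obtuse superbases, and they are related by the central symmetry $v\mapsto -v$: if $(v_0,v_1,v_2,v_3)$ is an obtuse superbase, the only obtuse superbases are reorderings of $\{v_0,v_1,v_2,v_3\}$ and of $\{-v_0,-v_1,-v_2,-v_3\}$; (b) the coforms of all (ordered) obtuse superbases of $\Lambda$ are related by the 24 index-permutations, i.e. for any two obtuse superbases $B,B'$ there is $\sigma\in S_4$ with $p'_{ij}=p_{\sigma(i)\sigma(j)}$ for all $i\ne j$.
   Context: A lattice $\Lambda\subset\mathbb R^3$ is the set of integer combinations of a basis $v_1,v_2,v_3$. A superbase is $(v_0,v_1,v_2,v_3)$ with $v_1,v_2,v_3$ a basis of $\Lambda$ and $v_0=-v_1-v_2-v_3$; its conorms are $p_{ij}=-v_i\cdot v_j$ for distinct $i,j\in\{0,1,2,3\}$ ($p_{ij}=p_{ji}$), and it is obtuse if all $p_{ij}\ge 0$. The coform is the matrix $\begin{pmatrix}p_{23}&p_{13}&p_{12}\\ p_{01}&p_{02}&p_{03}\end{pmatrix}$. An index-permutation $\sigma\in S_4$ maps conorms by $p_{ij}\mapsto p_{\sigma(i)\sigma(j)}$. The Voronoi domain of $\Lambda$ is $V(\Lambda)=\{p\in\mathbb R^3: |p|\le |p-v| \text{ for all } v\in\Lambda\}$. *)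

From Stdlib Require Import Reals ZArith List.
From mathcomp Require Import all_boot fingroup perm.
Set Implicit Arguments. Unset Strict Implicit. Unset Printing Implicit Defensive.

Open Scope R_scope.

Record V3 := mkV { vx : R; vy : R; vz : R }.

Definition vadd (u v : V3) : V3 := mkV (vx u + vx v) (vy u + vy v) (vz u + vz v).
Definition vopp (u : V3) : V3 := mkV (- vx u) (- vy u) (- vz u).
Definition vsub (u v : V3) : V3 := vadd u (vopp v).
Definition vscale (a : R) (u : V3) : V3 := mkV (a * vx u) (a * vy u) (a * vz u).
Definition vzero : V3 := mkV 0 0 0.
Definition dot (u v : V3) : R := vx u * vx v + vy u * vy v + vz u * vz v.
Definition cross (u v : V3) : V3 :=
  mkV (vy u * vz v - vz u * vy v) (vz u * vx v - vx u * vz v) (vx u * vy v - vy u * vx v).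
Definition det3 (u v w : V3) : R := dot u (cross v w).

Definition in_lattice (b1 b2 b3 : V3) (v : V3) : Prop :=
  exists a1 a2 a3 : Z,
    v = vadd (vscale (IZR a1) b1) (vadd (vscale (IZR a2) b2) (vscale (IZR a3) b3)).

Definition i0 : 'I_4 := @Ordinal 4 0 isT.
Definition i1 : 'I_4 := @Ordinal 4 1 isT.
Definition i2 : 'I_4 := @Ordinal 4 2 isT.
Definition i3 : 'I_4 := @Ordinal 4 3 isT.

(* v : 'I_4 -> V3 is a superbase of the lattice with basis b1 b2 b3:
   v1, v2, v3 is a basis of the lattice (it generates exactly the lattice;
   since the lattice has rank 3 this forces linear independence) and
   v0 = - v1 - v2 - v3. *)
Definition superbase (b1 b2 b3 : V3) (v : 'I_4 -> V3) : Prop :=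
  (forall w, in_lattice b1 b2 b3 w <-> in_lattice (v i1) (v i2) (v i3) w) /\
  v i0 = vopp (vadd (v i1) (vadd (v i2) (v i3))).

Definition conorm (v : 'I_4 -> V3) (i j : 'I_4) : R := - dot (v i) (v j).

Definition obtuse (v : 'I_4 -> V3) : Prop :=
  forall i j : 'I_4, i != j -> 0 <= conorm v i j.

Definition obtuse_superbase (b1 b2 b3 : V3) (v : 'I_4 -> V3) : Prop :=
  superbase b1 b2 b3 v /\ obtuse v.

Definition voronoi (b1 b2 b3 : V3) (p : V3) : Prop :=
  forall w, in_lattice b1 b2 b3 w -> dot p p <= dot (vsub p w) (vsub p w).

(* w is a facet vector: w is a nonzero lattice vector and the face
   V(Lambda) ∩ {p : |p| = |p - w|} is 2-dimensional (contains three
   non-collinear points).  Facets of V(Lambda) are in bijection with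
   facet vectors. *)
Definition facet_vector (b1 b2 b3 : V3) (w : V3) : Prop :=
  in_lattice b1 b2 b3 w /\ w <> vzero /\
  exists p q r : V3,
    voronoi b1 b2 b3 p /\ voronoi b1 b2 b3 q /\ voronoi b1 b2 b3 r /\
    dot p p = dot (vsub p w) (vsub p w) /\
    dot q q = dot (vsub q w) (vsub q w) /\
    dot r r = dot (vsub r w) (vsub r w) /\
    cross (vsub q p) (vsub r p) <> vzero.

(* Voronoi type V1: the Voronoi domain is a truncated octahedron, i.e.
   (among the five 3D parallelohedra) it has exactly 14 facets. *)
Definition voronoi_type_V1 (b1 b2 b3 : V3) : Prop :=
  exists s : list V3, NoDup s /\ length s = 14%nat /\
    forall w, facet_vector b1 b2 b3 w <-> In w s.

Definition reordering (v w : 'I_4 -> V3) : Prop :=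
  exists s : {perm 'I_4}, forall i, w i = v (s i).

Definition neg_sb (v : 'I_4 -> V3) : 'I_4 -> V3 := fun i => vopp (v i).

From Stdlib Require Import Reals ZArith List Bool Lra Lia ClassicalEpsilon Classical.
From mathcomp Require Import all_boot fingroup perm.
Open Scope R_scope.

(* A superbase minimising the sum of the squared lengths of its four vectors
   is obtuse: if p_ij < 0, the Selling step v_i -> -v_i, v_k -> v_k + v_i
   (k <> i, j) shortens it.  For an obtuse superbase, Selling's formula
   |sum_i l_i v_i|^2 = sum_{i<j} p_ij (l_i - l_j)^2 shows that reducing
   coefficients modulo 2 does not increase length, so, by Voronoi's
   characterisation of facet vectors as the strict minima of their classes
   modulo 2 Lambda, every facet vector is one of the 14 vectors +-v_i,
   v_i + v_j.  In type V1 all 14 must then be facet vectors; as v_i + v_j is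
   not one when v_i and v_j are orthogonal, all conorms are positive.
   Finally, for another superbase with integer coordinates on the first, the
   sum of squared lengths is sum p_ij q_ij with integers q_ij >= 2; with
   positive conorms it is minimal only when all q_ij = 2, which a finite check
   shows to happen exactly for the signed reorderings.  Two obtuse superbases
   are both minimal, hence related by a signed reordering, and conorms are
   invariant under v -> -v. *)

(** * Vectors and lattices *)

Definition comb (b c d : V3) (x y z : R) : V3 :=
  vadd (vscale x b) (vadd (vscale y c) (vscale z d)).

Lemma V3_ext (u v : V3) : vx u = vx v -> vy u = vy v -> vz u = vz v -> u = v.
Proof. destruct u, v; simpl; intros -> -> ->; reflexivity. Qed.

Ltac expand_vectors :=
  unfold comb, det3, vsub, vadd, vopp, vscale, vzero, dot, cross in *; simpl in *.

Ltac vector_ring := expand_vectors; apply V3_ext; simpl; ring.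

Ltac push_IZR :=
  repeat first [rewrite minus_IZR | rewrite plus_IZR | rewrite mult_IZR | rewrite opp_IZR].

Lemma dotDl u v w : dot (vadd u v) w = dot u w + dot v w. Proof. expand_vectors; ring. Qed.
Lemma dotDr u v w : dot w (vadd u v) = dot w u + dot w v. Proof. expand_vectors; ring. Qed.
Lemma dotNl u w : dot (vopp u) w = - dot u w. Proof. expand_vectors; ring. Qed.
Lemma dotNr u w : dot w (vopp u) = - dot w u. Proof. expand_vectors; ring. Qed.
Lemma dotZl a u w : dot (vscale a u) w = a * dot u w. Proof. expand_vectors; ring. Qed.
Lemma dotZr a u w : dot w (vscale a u) = a * dot w u. Proof. expand_vectors; ring. Qed.
Lemma dotC u w : dot u w = dot w u. Proof. expand_vectors; ring. Qed.

Ltac expand_dots :=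
  repeat first [ rewrite dotDl | rewrite dotDr | rewrite dotNl | rewrite dotNr
               | rewrite dotZl | rewrite dotZr ].

Lemma vopp_involutive u : vopp (vopp u) = u.
Proof. vector_ring. Qed.

Lemma vsub_eq0 u v : vsub u v = vzero -> u = v.
Proof.
  destruct u, v; unfold vsub, vadd, vopp, vzero; simpl; intro E.
  injection E; intros; apply V3_ext; simpl; lra.
Qed.

Lemma vscale_inj k u v : k <> 0 -> vscale k u = vscale k v -> u = v.
Proof.
  destruct u, v; unfold vscale; simpl; intros Hk E.
  injection E; intros; apply V3_ext; simpl; eapply Rmult_eq_reg_l; eassumption.
Qed.

Lemma dot_self_ge0 u : 0 <= dot u u.
Proof.
  destruct u as [u1 u2 u3]; unfold dot; simpl.
  pose proof (Rle_0_sqr u1); pose proof (Rle_0_sqr u2); pose proof (Rle_0_sqr u3).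
  unfold Rsqr in *; lra.
Qed.

Lemma dot_self_eq0 u : dot u u = 0 -> u = vzero.
Proof.
  destruct u as [u1 u2 u3]; unfold dot, vzero; simpl; intro H.
  pose proof (Rle_0_sqr u1); pose proof (Rle_0_sqr u2); pose proof (Rle_0_sqr u3).
  unfold Rsqr in *.
  apply V3_ext; simpl; apply Rsqr_0_uniq; unfold Rsqr; lra.
Qed.

Lemma cauchy_schwarz x y : (dot x y) ^ 2 <= dot x x * dot y y.
Proof.
  assert (E : dot x x * dot y y - (dot x y) ^ 2 = dot (cross x y) (cross x y))
    by (expand_vectors; ring).
  pose proof (dot_self_ge0 (cross x y)); lra.
Qed.

Section Lattice.
Variables b c d : V3.

Lemma in_lattice_add u v :
  in_lattice b c d u -> in_lattice b c d v -> in_lattice b c d (vadd u v).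
Proof.
  intros [x1 [x2 [x3 ->]]] [y1 [y2 [y3 ->]]].
  exists (x1 + y1)%Z, (x2 + y2)%Z, (x3 + y3)%Z. rewrite !plus_IZR. vector_ring.
Qed.

Lemma in_lattice_opp u : in_lattice b c d u -> in_lattice b c d (vopp u).
Proof.
  intros [x1 [x2 [x3 ->]]].
  exists (- x1)%Z, (- x2)%Z, (- x3)%Z. rewrite !opp_IZR. vector_ring.
Qed.

Lemma in_lattice_scale k u : in_lattice b c d u -> in_lattice b c d (vscale (IZR k) u).
Proof.
  intros [x1 [x2 [x3 ->]]].
  exists (k * x1)%Z, (k * x2)%Z, (k * x3)%Z. rewrite !mult_IZR. vector_ring.
Qed.

Lemma lattice_sub x y z :
  in_lattice b c d x -> in_lattice b c d y -> in_lattice b c d z ->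
  forall w, in_lattice x y z w -> in_lattice b c d w.
Proof.
  intros Hx Hy Hz w [k1 [k2 [k3 ->]]].
  apply in_lattice_add; [|apply in_lattice_add]; apply in_lattice_scale; assumption.
Qed.

End Lattice.

Ltac in_lattice_by k :=
  lazymatch k with (?k1, ?k2, ?k3) => exists k1, k2, k3; vector_ring end.

Lemma lattice_eq b c d x y z :
  in_lattice b c d x -> in_lattice b c d y -> in_lattice b c d z ->
  in_lattice x y z b -> in_lattice x y z c -> in_lattice x y z d ->
  forall w, in_lattice b c d w <-> in_lattice x y z w.
Proof. intros; split; apply lattice_sub; assumption. Qed.

Lemma comb_eq0 b c d x y z :
  det3 b c d <> 0 -> comb b c d x y z = vzero -> x = 0 /\ y = 0 /\ z = 0.
Proof.
  intros Hd E.
  assert (E1 : det3 (comb b c d x y z) c d = x * det3 b c d) by (expand_vectors; ring).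
  assert (E2 : det3 b (comb b c d x y z) d = y * det3 b c d) by (expand_vectors; ring).
  assert (E3 : det3 b c (comb b c d x y z) = z * det3 b c d) by (expand_vectors; ring).
  rewrite E in E1 E2 E3.
  assert (Z1 : det3 vzero c d = 0) by (expand_vectors; ring).
  assert (Z2 : det3 b vzero d = 0) by (expand_vectors; ring).
  assert (Z3 : det3 b c vzero = 0) by (expand_vectors; ring).
  rewrite Z1 in E1; rewrite Z2 in E2; rewrite Z3 in E3.
  repeat split; eapply Rmult_eq_reg_r; [| exact Hd | | exact Hd | | exact Hd ]; lra.
Qed.

Definition detZ (x1 y1 z1 x2 y2 z2 x3 y3 z3 : Z) : Z :=
  (x1 * (y2 * z3 - z2 * y3) - y1 * (x2 * z3 - z2 * x3) + z1 * (x2 * y3 - y2 * x3))%Z.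

Lemma det3_comb b c d x1 y1 z1 x2 y2 z2 x3 y3 z3 :
  det3 (comb b c d (IZR x1) (IZR y1) (IZR z1)) (comb b c d (IZR x2) (IZR y2) (IZR z2))
       (comb b c d (IZR x3) (IZR y3) (IZR z3)) =
  IZR (detZ x1 y1 z1 x2 y2 z2 x3 y3 z3) * det3 b c d.
Proof.
  unfold detZ. push_IZR.
  expand_vectors. ring.
Qed.

(** * Superbases *)

(* [superbase b1 b2 b3 v] is convertible to [superbase4 b1 b2 b3 (v i0) (v i1) (v i2) (v i3)]. *)
Definition superbase4 (b1 b2 b3 a b c d : V3) : Prop :=
  (forall w, in_lattice b1 b2 b3 w <-> in_lattice b c d w) /\
  a = vopp (vadd b (vadd c d)).

Section Superbase.
Variables b1 b2 b3 : V3.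

Lemma superbase4_swap01 a b c d :
  superbase4 b1 b2 b3 a b c d -> superbase4 b1 b2 b3 b a c d.
Proof.
  intros [HL ->]. split; [|vector_ring].
  intro w. rewrite HL. apply lattice_eq;
    [ in_lattice_by (-1, -1, -1)%Z | in_lattice_by (0, 1, 0)%Z | in_lattice_by (0, 0, 1)%Z
    | in_lattice_by (-1, -1, -1)%Z | in_lattice_by (0, 1, 0)%Z | in_lattice_by (0, 0, 1)%Z ].
Qed.

Lemma superbase4_rot a b c d :
  superbase4 b1 b2 b3 a b c d -> superbase4 b1 b2 b3 a c d b.
Proof.
  intros [HL ->]. split; [|vector_ring].
  intro w. rewrite HL. apply lattice_eq;
    [ in_lattice_by (0, 1, 0)%Z | in_lattice_by (0, 0, 1)%Z | in_lattice_by (1, 0, 0)%Z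
    | in_lattice_by (0, 0, 1)%Z | in_lattice_by (1, 0, 0)%Z | in_lattice_by (0, 1, 0)%Z ].
Qed.

Lemma superbase4_opp a b c d :
  superbase4 b1 b2 b3 a b c d ->
  superbase4 b1 b2 b3 (vopp a) (vopp b) (vopp c) (vopp d).
Proof.
  intros [HL ->]. split; [|vector_ring].
  intro w. rewrite HL. apply lattice_eq;
    [ in_lattice_by (-1, 0, 0)%Z | in_lattice_by (0, -1, 0)%Z | in_lattice_by (0, 0, -1)%Z
    | in_lattice_by (-1, 0, 0)%Z | in_lattice_by (0, -1, 0)%Z | in_lattice_by (0, 0, -1)%Z ].
Qed.

Lemma superbase4_in_lattice a b c d : superbase4 b1 b2 b3 a b c d ->
  in_lattice b1 b2 b3 a /\ in_lattice b1 b2 b3 b /\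
  in_lattice b1 b2 b3 c /\ in_lattice b1 b2 b3 d.
Proof.
  intros [HL ->]. rewrite !HL.
  split; [|split; [|split]];
    [ in_lattice_by (-1, -1, -1)%Z | in_lattice_by (1, 0, 0)%Z
    | in_lattice_by (0, 1, 0)%Z | in_lattice_by (0, 0, 1)%Z ].
Qed.

Lemma superbase4_det a b c d :
  det3 b1 b2 b3 <> 0 -> superbase4 b1 b2 b3 a b c d -> det3 b c d <> 0.
Proof.
  intros Hd [HL _] H0. apply Hd.
  destruct (proj1 (HL b1) ltac:(in_lattice_by (1, 0, 0)%Z)) as [x1 [y1 [z1 ->]]].
  destruct (proj1 (HL b2) ltac:(in_lattice_by (0, 1, 0)%Z)) as [x2 [y2 [z2 ->]]].
  destruct (proj1 (HL b3) ltac:(in_lattice_by (0, 0, 1)%Z)) as [x3 [y3 [z3 ->]]].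
  change (det3 (comb b c d (IZR x1) (IZR y1) (IZR z1)) (comb b c d (IZR x2) (IZR y2) (IZR z2))
               (comb b c d (IZR x3) (IZR y3) (IZR z3)) = 0).
  rewrite det3_comb H0. ring.
Qed.

Lemma superbase4_lincomb_eq0 a b c d k0 k1 k2 k3 :
  det3 b1 b2 b3 <> 0 -> superbase4 b1 b2 b3 a b c d ->
  vadd (vscale k0 a) (vadd (vscale k1 b) (vadd (vscale k2 c) (vscale k3 d))) = vzero ->
  k1 = k0 /\ k2 = k0 /\ k3 = k0.
Proof.
  intros Hd HS E.
  assert (Hd' := superbase4_det _ _ _ _ Hd HS). destruct HS as [_ Ha].
  assert (E' : comb b c d (k1 - k0) (k2 - k0) (k3 - k0) = vzero)
    by (rewrite -E Ha; vector_ring).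
  destruct (comb_eq0 _ _ _ _ _ _ Hd' E') as [? [? ?]]. lra.
Qed.

End Superbase.

(* Refutes [u = w] for vectors [u], [w] of a superbase, given the coefficients
   of [u - w] on [a b c d] (which must not be all equal). *)
Ltac superbase_neq Hd HS k0 k1 k2 k3 :=
  let E := fresh "E" in intro E;
  match type of E with ?u = ?w =>
    destruct (superbase4_lincomb_eq0 _ _ _ _ _ _ _ k0 k1 k2 k3 Hd HS) as [? [? ?]];
    [ transitivity (vsub u w); [vector_ring | rewrite E; vector_ring] | lra ]
  end.


(** * Facet vectors *)

Lemma bisector_eq z w : dot z z = dot (vsub z w) (vsub z w) -> 2 * dot z w = dot w w.
Proof. unfold vsub. expand_dots. rewrite (dotC w z). intro; lra. Qed.

Lemma voronoi_le b1 b2 b3 z y :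
  voronoi b1 b2 b3 z -> in_lattice b1 b2 b3 y -> 2 * dot z y <= dot y y.
Proof.
  intros Hv Hy. specialize (Hv y Hy). revert Hv.
  unfold vsub. expand_dots. rewrite (dotC y z). intro; lra.
Qed.

Lemma orthogonal2_parallel e f y : dot e y = 0 -> dot f y = 0 ->
  vscale (dot (cross e f) (cross e f)) y = vscale (dot (cross e f) y) (cross e f).
Proof.
  intros He Hf. apply vsub_eq0.
  transitivity (vsub (vscale (dot f y) (cross (cross e f) e))
                     (vscale (dot e y) (cross (cross e f) f))); [vector_ring|].
  rewrite He Hf. vector_ring.
Qed.

Lemma parallel_of_orthogonal2 e f x w :
  dot e x = 0 -> dot f x = 0 -> dot e w = 0 -> dot f w = 0 ->
  cross e f <> vzero -> w <> vzero -> exists l, x = vscale l w.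
Proof.
  intros Hex Hfx Hew Hfw Hn Hw.
  assert (Px := orthogonal2_parallel _ _ _ Hex Hfx).
  assert (Pw := orthogonal2_parallel _ _ _ Hew Hfw).
  revert Hn Px Pw. generalize (cross e f) as n. intros n Hn Px Pw.
  assert (HN : dot n n <> 0) by (intro E; apply Hn, dot_self_eq0, E).
  assert (Hnw : dot n w <> 0).
  { intro E. rewrite E in Pw. apply Hw, (vscale_inj _ _ _ HN). rewrite Pw. vector_ring. }
  exists (dot n x / dot n w).
  apply (vscale_inj _ _ _ HN). rewrite Px.
  transitivity (vscale (dot n x / dot n w) (vscale (dot n n) w)); [|vector_ring].
  rewrite Pw. expand_vectors. apply V3_ext; simpl; field; exact Hnw.
Qed.

(* One half of Voronoi's characterisation of facet vectors. *)
Lemma facet_vector_short b1 b2 b3 w x :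
  facet_vector b1 b2 b3 w -> in_lattice b1 b2 b3 x ->
  dot (vadd w (vscale 2 x)) (vadd w (vscale 2 x)) <= dot w w ->
  x = vzero \/ x = vopp w.
Proof.
  intros [Hw [Hw0 [p [q [r [Vp [Vq [Vr [Ep [Eq [Er Hn]]]]]]]]]]] Hx Hshort.
  apply bisector_eq in Ep, Eq, Er.
  rewrite !dotDl !dotDr !dotZl !dotZr (dotC x w) in Hshort.
  (* On the facet, the Voronoi inequalities for [w + x] and [- x] are tight. *)
  assert (Hface : forall z, voronoi b1 b2 b3 z -> 2 * dot z w = dot w w ->
                   2 * dot z x = - dot x x).
  { intros z Vz Ez.
    pose proof (voronoi_le _ _ _ _ _ Vz (in_lattice_add _ _ _ _ _ Hw Hx)) as H1.
    pose proof (voronoi_le _ _ _ _ _ Vz (in_lattice_opp _ _ _ _ Hx)) as H2.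
    rewrite !dotDl !dotDr (dotC x w) in H1. rewrite !dotNl !dotNr in H2. lra. }
  assert (Kp := Hface p Vp Ep). assert (Kq := Hface q Vq Eq). assert (Kr := Hface r Vr Er).
  assert (Hsub : forall u v y, dot (vsub u v) y = dot u y - dot v y)
    by (intros; unfold vsub; rewrite dotDl dotNl; ring).
  destruct (parallel_of_orthogonal2 (vsub q p) (vsub r p) x w) as [l ->];
    rewrite ?Hsub; try lra; try assumption.
  assert (Hww : dot w w <> 0) by (intro E; apply Hw0, dot_self_eq0, E).
  rewrite !dotZl !dotZr in Kp.
  assert (El : (l * (l + 1)) * dot w w = 0) by nra.
  destruct (Rmult_integral _ _ El) as [E|E]; [|contradiction].
  destruct (Rmult_integral _ _ E) as [-> | E1]; [left | right];
    [|replace l with (-1) by lra]; vector_ring.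
Qed.

Lemma orthogonal_sum_not_facet b1 b2 b3 x y :
  in_lattice b1 b2 b3 x -> in_lattice b1 b2 b3 y ->
  x <> vzero -> y <> vzero -> dot x y = 0 -> ~ facet_vector b1 b2 b3 (vadd x y).
Proof.
  intros Hx Hy Hx0 Hy0 Hxy Hf.
  destruct (facet_vector_short _ _ _ _ _ Hf (in_lattice_opp _ _ _ _ Hy)) as [E|E].
  - expand_dots. rewrite (dotC y x). lra.
  - apply Hy0. rewrite -(vopp_involutive y) E. vector_ring.
  - apply Hx0. transitivity (vsub (vopp y) (vopp (vadd x y))); [vector_ring|].
    rewrite E. vector_ring.
Qed.

(** * Obtuse superbases and their facet vectors *)

Definition conorms4 (P : R -> Prop) (a b c d : V3) : Prop :=
  P (- dot a b) /\ P (- dot a c) /\ P (- dot a d) /\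
  P (- dot b c) /\ P (- dot b d) /\ P (- dot c d).

Definition obtuse4 (a b c d : V3) : Prop := conorms4 (fun p => 0 <= p) a b c d.

Definition strictly_obtuse4 (a b c d : V3) : Prop := conorms4 (fun p => 0 < p) a b c d.

Lemma selling_norm a b c d x y z : a = vopp (vadd b (vadd c d)) ->
  dot (comb b c d x y z) (comb b c d x y z) =
  - dot a b * x ^ 2 + - dot a c * y ^ 2 + - dot a d * z ^ 2 +
  - dot b c * (x - y) ^ 2 + - dot b d * (x - z) ^ 2 + - dot c d * (y - z) ^ 2.
Proof. intros ->. expand_vectors. ring. Qed.

Lemma sq_sub_mod2_le (m n : Z) :
  (IZR (m mod 2) - IZR (n mod 2)) ^ 2 <= (IZR m - IZR n) ^ 2.
Proof.
  assert (HZ : ((m mod 2 - n mod 2) * (m mod 2 - n mod 2) <= (m - n) * (m - n))%Z).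
  { assert (Hm := Z.mod_pos_bound m 2 ltac:(lia)).
    assert (Hn := Z.mod_pos_bound n 2 ltac:(lia)).
    assert (Hsq := Z.square_nonneg (m - n)).
    destruct (Z.eq_dec (m mod 2) (n mod 2)) as [E|E].
    - rewrite E Z.sub_diag. lia.
    - assert (m - n <> 0)%Z by (intro F; apply E; replace m with n by lia; reflexivity).
      nia. }
  apply IZR_le in HZ. rewrite !mult_IZR !minus_IZR in HZ. lra.
Qed.

(* By Selling's formula, since |m mod 2 - n mod 2| <= |m - n|. *)
Lemma comb_mod2_le a b c d (k1 k2 k3 : Z) :
  a = vopp (vadd b (vadd c d)) -> obtuse4 a b c d ->
  let v := comb b c d (IZR (k1 mod 2)) (IZR (k2 mod 2)) (IZR (k3 mod 2)) in
  let w := comb b c d (IZR k1) (IZR k2) (IZR k3) in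
  dot v v <= dot w w.
Proof.
  intros Ha [H1 [H2 [H3 [H4 [H5 H6]]]]] v w. unfold v, w.
  rewrite !(selling_norm a) //.
  pose proof (sq_sub_mod2_le k1 0) as Q1; pose proof (sq_sub_mod2_le k2 0) as Q2;
  pose proof (sq_sub_mod2_le k3 0) as Q3; rewrite Zmod_0_l !Rminus_0_r in Q1 Q2 Q3.
  pose proof (Rmult_le_compat_l _ _ _ H1 Q1).
  pose proof (Rmult_le_compat_l _ _ _ H2 Q2).
  pose proof (Rmult_le_compat_l _ _ _ H3 Q3).
  pose proof (Rmult_le_compat_l _ _ _ H4 (sq_sub_mod2_le k1 k2)).
  pose proof (Rmult_le_compat_l _ _ _ H5 (sq_sub_mod2_le k1 k3)).
  pose proof (Rmult_le_compat_l _ _ _ H6 (sq_sub_mod2_le k2 k3)).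
  lra.
Qed.

Definition facet_candidates (a b c d : V3) : list V3 :=
  [:: a; b; c; d; vopp a; vopp b; vopp c; vopp d;
      vadd a b; vadd a c; vadd a d; vadd b c; vadd b d; vadd c d].

Ltac in_candidates :=
  unfold facet_candidates; simpl In; repeat first [left; vector_ring | right].

Lemma binary_comb_in_candidates a b c d (s1 s2 s3 : Z) :
  a = vopp (vadd b (vadd c d)) ->
  (0 <= s1 <= 1)%Z -> (0 <= s2 <= 1)%Z -> (0 <= s3 <= 1)%Z ->
  comb b c d (IZR s1) (IZR s2) (IZR s3) <> vzero ->
  In (comb b c d (IZR s1) (IZR s2) (IZR s3)) (facet_candidates a b c d) /\
  In (vopp (comb b c d (IZR s1) (IZR s2) (IZR s3))) (facet_candidates a b c d).
Proof.
  intros -> H1 H2 H3 H0.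
  assert (s1 = 0 \/ s1 = 1)%Z as [-> | ->] by lia;
  assert (s2 = 0 \/ s2 = 1)%Z as [-> | ->] by lia;
  assert (s3 = 0 \/ s3 = 1)%Z as [-> | ->] by lia;
  solve [ exfalso; apply H0; vector_ring | split; in_candidates ].
Qed.

Lemma facet_in_candidates b1 b2 b3 a b c d w :
  superbase4 b1 b2 b3 a b c d -> obtuse4 a b c d ->
  facet_vector b1 b2 b3 w -> In w (facet_candidates a b c d).
Proof.
  intros [HL Ha] HO Hf. pose proof Hf as [Hw [Hw0 _]].
  destruct (proj1 (HL w) Hw) as [k1 [k2 [k3 Ew]]]. fold (comb b c d) in Ew.
  set (x := comb b c d (IZR (- (k1 / 2))) (IZR (- (k2 / 2))) (IZR (- (k3 / 2)))).
  assert (Hx : in_lattice b1 b2 b3 x) by (apply HL; do 3 eexists; reflexivity).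
  set (u := comb b c d (IZR (k1 mod 2)) (IZR (k2 mod 2)) (IZR (k3 mod 2))).
  assert (Hu : vadd w (vscale 2 x) = u).
  { assert (D : forall k, IZR k = 2 * IZR (k / 2) + IZR (k mod 2)).
    { intro k. rewrite {1}(Z.div_mod k 2) // plus_IZR mult_IZR. reflexivity. }
    rewrite Ew (D k1) (D k2) (D k3). unfold x, u. rewrite !opp_IZR. vector_ring. }
  assert (Hle : dot (vadd w (vscale 2 x)) (vadd w (vscale 2 x)) <= dot w w)
    by (rewrite Hu Ew; apply (comb_mod2_le a); assumption).
  assert (Hbin : forall k, (0 <= k mod 2 <= 1)%Z)
    by (intro k; pose proof (Z.mod_pos_bound k 2); lia).
  assert (Hcand := binary_comb_in_candidates a b c d _ _ _ Ha (Hbin k1) (Hbin k2) (Hbin k3)).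
  fold u in Hcand.
  destruct (facet_vector_short _ _ _ _ _ Hf Hx Hle) as [E|E]; rewrite E in Hu.
  - assert (Ewu : w = u) by (rewrite -Hu; vector_ring).
    rewrite Ewu in Hw0 |- *. apply Hcand, Hw0.
  - assert (Ewu : w = vopp u) by (rewrite -Hu; vector_ring).
    rewrite Ewu. apply Hcand. intro Hu0. apply Hw0. rewrite Ewu Hu0. vector_ring.
Qed.

Lemma V1_candidates_facets b1 b2 b3 a b c d w :
  superbase4 b1 b2 b3 a b c d -> obtuse4 a b c d -> voronoi_type_V1 b1 b2 b3 ->
  In w (facet_candidates a b c d) -> facet_vector b1 b2 b3 w.
Proof.
  intros HS HO [s [Hnd [Hlen Hs]]] Hw. apply Hs.
  (* Fourteen distinct facet vectors among fourteen candidates: all of them. *)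
  eapply NoDup_length_incl; [exact Hnd | | | exact Hw].
  - rewrite Hlen. reflexivity.
  - intros v Hv. apply (facet_in_candidates b1 b2 b3); [exact HS | exact HO | apply Hs, Hv].
Qed.

Lemma V1_strictly_obtuse b1 b2 b3 a b c d :
  det3 b1 b2 b3 <> 0 -> voronoi_type_V1 b1 b2 b3 ->
  superbase4 b1 b2 b3 a b c d -> obtuse4 a b c d -> strictly_obtuse4 a b c d.
Proof.
  intros Hd HV HS HO.
  destruct (superbase4_in_lattice _ _ _ _ _ _ _ HS) as [La [Lb [Lc Ld]]].
  assert (Ha0 : a <> vzero) by superbase_neq Hd HS 1 0 0 0.
  assert (Hb0 : b <> vzero) by superbase_neq Hd HS 0 1 0 0.
  assert (Hc0 : c <> vzero) by superbase_neq Hd HS 0 0 1 0.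
  assert (Hd0 : d <> vzero) by superbase_neq Hd HS 0 0 0 1.
  (* A vanishing conorm would make a candidate fail to be a facet vector. *)
  assert (Hpos : forall x y, in_lattice b1 b2 b3 x -> in_lattice b1 b2 b3 y ->
                  x <> vzero -> y <> vzero -> In (vadd x y) (facet_candidates a b c d) ->
                  0 <= - dot x y -> 0 < - dot x y).
  { intros x y Hx Hy Hx0 Hy0 Hin Hxy.
    destruct (Rle_lt_or_eq_dec _ _ Hxy) as [Hlt | Heq]; [exact Hlt | exfalso].
    apply (orthogonal_sum_not_facet _ _ _ _ _ Hx Hy Hx0 Hy0); [lra|].
    exact (V1_candidates_facets _ _ _ _ _ _ _ _ HS HO HV Hin). }
  destruct HO as [H1 [H2 [H3 [H4 [H5 H6]]]]].
  repeat split; apply Hpos; try assumption; unfold facet_candidates; simpl; tauto.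
Qed.

(** * Existence of an obtuse superbase *)

Definition sqnorm_sum (a b c d : V3) : R := dot a a + dot b b + dot c c + dot d d.

Lemma selling_step b1 b2 b3 a b c d : superbase4 b1 b2 b3 a b c d ->
  superbase4 b1 b2 b3 (vopp a) b (vadd c a) (vadd d a) /\
  sqnorm_sum (vopp a) b (vadd c a) (vadd d a) = sqnorm_sum a b c d + 2 * - dot a b.
Proof.
  intros [HL ->]. split; [split|].
  - intro w. rewrite HL. apply lattice_eq;
      [ in_lattice_by (1, 0, 0)%Z | in_lattice_by (-1, 0, -1)%Z | in_lattice_by (-1, -1, 0)%Z
      | in_lattice_by (1, 0, 0)%Z | in_lattice_by (-1, 0, -1)%Z | in_lattice_by (-1, -1, 0)%Z ].
  - vector_ring.
  - unfold sqnorm_sum. expand_vectors. ring.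
Qed.

Lemma minimal_superbase4_obtuse b1 b2 b3 a b c d : superbase4 b1 b2 b3 a b c d ->
  (forall a' b' c' d', superbase4 b1 b2 b3 a' b' c' d' ->
     sqnorm_sum a b c d <= sqnorm_sum a' b' c' d') ->
  obtuse4 a b c d.
Proof.
  intros HS Hmin.
  (* Otherwise a Selling step would produce a shorter superbase. *)
  assert (Hpair : forall x y z t, superbase4 b1 b2 b3 x y z t ->
                   sqnorm_sum x y z t = sqnorm_sum a b c d -> 0 <= - dot x y).
  { intros x y z t HS' E. destruct (selling_step _ _ _ _ _ _ _ HS') as [HS'' E'].
    specialize (Hmin _ _ _ _ HS''). lra. }
  assert (Hrot := superbase4_rot _ _ _ _ _ _ _ HS).
  assert (Hswap := superbase4_swap01 _ _ _ _ _ _ _ HS).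
  unfold obtuse4, conorms4. repeat split.
  - apply (Hpair a b c d); [exact HS | reflexivity].
  - apply (Hpair a c d b); [exact Hrot |].
    unfold sqnorm_sum; ring.
  - apply (Hpair a d b c); [apply superbase4_rot, Hrot |].
    unfold sqnorm_sum; ring.
  - apply (Hpair b c d a); [apply superbase4_rot, Hswap |].
    unfold sqnorm_sum; ring.
  - apply (Hpair b d a c); [apply superbase4_rot, superbase4_rot, Hswap |].
    unfold sqnorm_sum; ring.
  - apply (Hpair c d b a); [apply superbase4_rot, superbase4_swap01, Hrot |].
    unfold sqnorm_sum; ring.
Qed.

(* Cramer's rule followed by Cauchy-Schwarz. *)
Lemma comb_coeff_bound b1 b2 b3 x y z :
  let v := comb b1 b2 b3 x y z in
  let M := dot (cross b2 b3) (cross b2 b3) + dot (cross b3 b1) (cross b3 b1) +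
           dot (cross b1 b2) (cross b1 b2) in
  (x * det3 b1 b2 b3) ^ 2 <= dot v v * M /\ (y * det3 b1 b2 b3) ^ 2 <= dot v v * M /\
  (z * det3 b1 b2 b3) ^ 2 <= dot v v * M.
Proof.
  intros v M.
  assert (Ex : x * det3 b1 b2 b3 = dot v (cross b2 b3)) by (unfold v; expand_vectors; ring).
  assert (Ey : y * det3 b1 b2 b3 = dot v (cross b3 b1)) by (unfold v; expand_vectors; ring).
  assert (Ez : z * det3 b1 b2 b3 = dot v (cross b1 b2)) by (unfold v; expand_vectors; ring).
  rewrite Ex Ey Ez.
  pose proof (cauchy_schwarz v (cross b2 b3)); pose proof (cauchy_schwarz v (cross b3 b1));
  pose proof (cauchy_schwarz v (cross b1 b2)).
  pose proof (Rmult_le_pos _ _ (dot_self_ge0 v) (dot_self_ge0 (cross b2 b3)));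
  pose proof (Rmult_le_pos _ _ (dot_self_ge0 v) (dot_self_ge0 (cross b3 b1)));
  pose proof (Rmult_le_pos _ _ (dot_self_ge0 v) (dot_self_ge0 (cross b1 b2))).
  unfold M. repeat split; nra.
Qed.

Definition Z_range (K : Z) : list Z :=
  map (fun n => (Z.of_nat n - K)%Z) (List.seq 0 (Z.to_nat (2 * K))).

Lemma in_Z_range K k : (- K < k < K)%Z -> In k (Z_range K).
Proof.
  intro H. apply in_map_iff. exists (Z.to_nat (k + K)). split.
  - rewrite Z2Nat.id; lia.
  - apply in_seq. lia.
Qed.

Lemma lattice_ball_finite b1 b2 b3 (C : R) : det3 b1 b2 b3 <> 0 ->
  exists l, forall v, in_lattice b1 b2 b3 v -> dot v v <= C -> In v l.
Proof.
  intro Hd.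
  set (M := dot (cross b2 b3) (cross b2 b3) + dot (cross b3 b1) (cross b3 b1) +
            dot (cross b1 b2) (cross b1 b2)).
  set (D := det3 b1 b2 b3) in *.
  set (K := up (C * M / D ^ 2)).
  assert (HK : C * M / D ^ 2 < IZR K) by apply archimed.
  set (R3 := list_prod (list_prod (Z_range K) (Z_range K)) (Z_range K)).
  exists (map (fun t => comb b1 b2 b3 (IZR (fst (fst t))) (IZR (snd (fst t))) (IZR (snd t))) R3).
  intros v [k1 [k2 [k3 Ev]]] Hv.
  change (v = comb b1 b2 b3 (IZR k1) (IZR k2) (IZR k3)) in Ev.
  assert (HM : 0 <= M) by (unfold M; pose proof (dot_self_ge0 (cross b2 b3));
    pose proof (dot_self_ge0 (cross b3 b1)); pose proof (dot_self_ge0 (cross b1 b2)); lra).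
  assert (HD : 0 < D ^ 2) by (simpl; rewrite Rmult_1_r; apply Rsqr_pos_lt, Hd).
  assert (Hrange : forall k : Z, (IZR k * D) ^ 2 <= dot v v * M -> In k (Z_range K)).
  { intros k Hk. apply in_Z_range.
    assert (Hk' : IZR k ^ 2 < IZR K).
    { apply (Rle_lt_trans _ (C * M / D ^ 2)); [|exact HK].
      apply (Rmult_le_reg_r (D ^ 2)); [exact HD|].
      unfold Rdiv. rewrite Rmult_assoc Rinv_l; [|lra].
      pose proof (Rmult_le_compat_r _ _ _ HM Hv). nra. }
    replace (IZR k ^ 2) with (IZR (k * k)) in Hk' by (rewrite mult_IZR; ring).
    apply lt_IZR in Hk'. nia. }
  destruct (comb_coeff_bound b1 b2 b3 (IZR k1) (IZR k2) (IZR k3)) as [H1 [H2 H3]].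
  rewrite -Ev in H1 H2 H3.
  apply in_map_iff. exists ((k1, k2), k3). split; [symmetry; exact Ev|].
  apply in_prod; [apply in_prod|]; apply Hrange; assumption.
Qed.

Lemma list_argmin (A : Type) (P : A -> Prop) (g : A -> R) (l : list A) :
  (exists x, In x l /\ P x) ->
  exists m, In m l /\ P m /\ forall y, In y l -> P y -> g m <= g y.
Proof.
  induction l as [|a l IH]; intros [x [Hx Px]]; [destruct Hx|].
  destruct (classic (exists x, In x l /\ P x)) as [Hl | Hl].
  - destruct (IH Hl) as [m [Hm [Pm Hmin]]].
    destruct (classic (P a /\ g a < g m)) as [[Pa Ha] | Ha].
    + exists a. split; [left; reflexivity | split; [exact Pa |]].
      intros y [<- | Hy] Py; [lra | specialize (Hmin y Hy Py); lra].
    + exists m. split; [right; exact Hm | split; [exact Pm |]].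
      intros y [<- | Hy] Py; [| exact (Hmin y Hy Py)].
      destruct (Rlt_le_dec (g a) (g m)); [exfalso; tauto | assumption].
  - assert (Pa : P a) by (destruct Hx as [<- | Hx]; [exact Px | exfalso; eauto]).
    exists a. split; [left; reflexivity | split; [exact Pa |]].
    intros y [<- | Hy] Py; [lra | exfalso; eauto].
Qed.

Lemma exists_minimal_superbase4 b1 b2 b3 : det3 b1 b2 b3 <> 0 ->
  exists a b c d, superbase4 b1 b2 b3 a b c d /\
    forall a' b' c' d', superbase4 b1 b2 b3 a' b' c' d' ->
      sqnorm_sum a b c d <= sqnorm_sum a' b' c' d'.
Proof.
  intro Hd.
  set (a0 := vopp (vadd b1 (vadd b2 b3))).
  assert (H0 : superbase4 b1 b2 b3 a0 b1 b2 b3) by (split; [tauto | reflexivity]).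
  set (C := sqnorm_sum a0 b1 b2 b3).
  destruct (lattice_ball_finite b1 b2 b3 C Hd) as [l Hl].
  set (P := fun t : V3 * V3 * V3 =>
              superbase4 b1 b2 b3 (vopp (vadd t.1.1 (vadd t.1.2 t.2))) t.1.1 t.1.2 t.2).
  set (g := fun t : V3 * V3 * V3 =>
              sqnorm_sum (vopp (vadd t.1.1 (vadd t.1.2 t.2))) t.1.1 t.1.2 t.2).
  assert (Hin : forall a b c d, superbase4 b1 b2 b3 a b c d -> sqnorm_sum a b c d <= C ->
                 In (b, c, d) (list_prod (list_prod l l) l) /\ P (b, c, d) /\
                 g (b, c, d) = sqnorm_sum a b c d).
  { intros a b c d HS Hs. pose proof HS as [_ Ha].
    destruct (superbase4_in_lattice _ _ _ _ _ _ _ HS) as [_ [Lb [Lc Ld]]].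
    unfold sqnorm_sum in Hs.
    pose proof (dot_self_ge0 a); pose proof (dot_self_ge0 b);
    pose proof (dot_self_ge0 c); pose proof (dot_self_ge0 d).
    unfold P, g; simpl; rewrite -Ha.
    split; [|split; [exact HS | reflexivity]].
    apply in_prod; [apply in_prod|]; apply Hl; (assumption || lra). }
  destruct (Hin _ _ _ _ H0 (Rle_refl _)) as [I0 [P0 g0]].
  destruct (list_argmin _ P g _ (ex_intro _ _ (conj I0 P0))) as [m [Im [Pm Hmin]]].
  exists (vopp (vadd m.1.1 (vadd m.1.2 m.2))), m.1.1, m.1.2, m.2.
  split; [exact Pm|]. intros a' b' c' d' HS'. fold (g m).
  destruct (Rle_lt_dec (sqnorm_sum a' b' c' d') C) as [Hle | Hlt].
  - destruct (Hin _ _ _ _ HS' Hle) as [I1 [P1 g1]]. rewrite -g1. apply Hmin; assumption.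
  - pose proof (Hmin _ I0 P0). fold C in g0. lra.
Qed.

Lemma exists_obtuse_superbase4 b1 b2 b3 : det3 b1 b2 b3 <> 0 ->
  exists a b c d, superbase4 b1 b2 b3 a b c d /\ obtuse4 a b c d.
Proof.
  intro Hd. destruct (exists_minimal_superbase4 _ _ _ Hd) as [a [b [c [d [HS Hmin]]]]].
  exists a, b, c, d. split; [exact HS | exact (minimal_superbase4_obtuse _ _ _ _ _ _ _ HS Hmin)].
Qed.

(** * Uniqueness of the obtuse superbase *)

(* [qform p q r] is the squared length of the integer vector (p, q, r, -p-q-r). *)
Definition qform (p q r : Z) : Z := (p * p + q * q + r * r + (p + q + r) * (p + q + r))%Z.

Lemma qform_ge2 p q r : ~ (p = 0 /\ q = 0 /\ r = 0)%Z -> (2 <= qform p q r)%Z.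
Proof.
  intro H. unfold qform.
  destruct (Z.eq_dec p 0); destruct (Z.eq_dec q 0); destruct (Z.eq_dec r 0); nia.
Qed.

Lemma qform_eq2_bound p q r :
  qform p q r = 2%Z -> (-1 <= p <= 1 /\ -1 <= q <= 1 /\ -1 <= r <= 1)%Z.
Proof.
  unfold qform. intro H.
  pose proof (Z.square_nonneg p); pose proof (Z.square_nonneg q);
  pose proof (Z.square_nonneg r); pose proof (Z.square_nonneg (p + q + r)).
  assert (p * p <= 2 /\ q * q <= 2 /\ r * r <= 2)%Z by lia.
  repeat split; nia.
Qed.

Lemma qform_columns_ge2 (x1 y1 z1 x2 y2 z2 x3 y3 z3 : Z) :
  detZ x1 y1 z1 x2 y2 z2 x3 y3 z3 <> 0%Z ->
  (2 <= qform x1 x2 x3 /\ 2 <= qform y1 y2 y3 /\ 2 <= qform z1 z2 z3 /\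
   2 <= qform (x1 - y1) (x2 - y2) (x3 - y3) /\ 2 <= qform (x1 - z1) (x2 - z2) (x3 - z3) /\
   2 <= qform (y1 - z1) (y2 - z2) (y3 - z3))%Z.
Proof.
  unfold detZ. intro Hdet.
  repeat split; apply qform_ge2; intros [E1 [E2 E3]]; apply Hdet;
  first [ rewrite E1 E2 E3
        | replace x1 with y1 by lia; replace x2 with y2 by lia; replace x3 with y3 by lia
        | replace x1 with z1 by lia; replace x2 with z2 by lia; replace x3 with z3 by lia
        | replace y1 with z1 by lia; replace y2 with z2 by lia; replace y3 with z3 by lia ];
  ring.
Qed.

Lemma sqnorm_sum_conorms a b c d : a = vopp (vadd b (vadd c d)) ->
  sqnorm_sum a b c d =
  2 * (- dot a b + - dot a c + - dot a d + - dot b c + - dot b d + - dot c d).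
Proof. intros ->. unfold sqnorm_sum. expand_vectors. ring. Qed.

Lemma sqnorm_sum_comb a b c d (x1 y1 z1 x2 y2 z2 x3 y3 z3 : Z) :
  a = vopp (vadd b (vadd c d)) ->
  let b' := comb b c d (IZR x1) (IZR y1) (IZR z1) in
  let c' := comb b c d (IZR x2) (IZR y2) (IZR z2) in
  let d' := comb b c d (IZR x3) (IZR y3) (IZR z3) in
  sqnorm_sum (vopp (vadd b' (vadd c' d'))) b' c' d' =
  - dot a b * IZR (qform x1 x2 x3) + - dot a c * IZR (qform y1 y2 y3) +
  - dot a d * IZR (qform z1 z2 z3) + - dot b c * IZR (qform (x1 - y1) (x2 - y2) (x3 - y3)) +
  - dot b d * IZR (qform (x1 - z1) (x2 - z2) (x3 - z3)) +
  - dot c d * IZR (qform (y1 - z1) (y2 - z2) (y3 - z3)).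
Proof.
  intros -> b' c' d'. unfold qform, sqnorm_sum, b', c', d'. push_IZR.
  expand_vectors. ring.
Qed.

(* [superbase_coeffs x y z] holds when [x b + y c + z d] is one of [a], [b], [c], [d]. *)
Definition superbase_coeffs (x y z : Z) : bool :=
  [|| [&& x =? -1, y =? -1 & z =? -1], [&& x =? 1, y =? 0 & z =? 0],
      [&& x =? 0, y =? 1 & z =? 0] | [&& x =? 0, y =? 0 & z =? 1]]%Z.

Lemma superbase_coeffs_in a b c d x y z : a = vopp (vadd b (vadd c d)) ->
  superbase_coeffs x y z = true -> In (comb b c d (IZR x) (IZR y) (IZR z)) [:: a; b; c; d].
Proof.
  intros -> H. unfold superbase_coeffs in H.
  rewrite !orb_true_iff !andb_true_iff !Z.eqb_eq in H.
  decompose [or and] H; subst; simpl; [left | right; left | right; right; left | do 3 right; left];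
    vector_ring.
Qed.

Lemma superbase_coeffs_in_opp a b c d x y z : a = vopp (vadd b (vadd c d)) ->
  superbase_coeffs (- x) (- y) (- z) = true ->
  In (comb b c d (IZR x) (IZR y) (IZR z)) [:: vopp a; vopp b; vopp c; vopp d].
Proof.
  intros Ha H.
  replace (comb b c d (IZR x) (IZR y) (IZR z))
    with (vopp (comb b c d (IZR (- x)) (IZR (- y)) (IZR (- z)))) by (push_IZR; vector_ring).
  apply (in_map vopp [:: a; b; c; d]), superbase_coeffs_in; assumption.
Qed.

Definition for_unit (P : Z -> bool) : bool := P (-1)%Z && P 0%Z && P 1%Z.

Lemma for_unitP P k : for_unit P = true -> (-1 <= k <= 1)%Z -> P k = true.
Proof.
  unfold for_unit. rewrite !andb_true_iff. intros [[H1 H2] H3] Hk.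
  assert (k = -1 \/ k = 0 \/ k = 1)%Z as [-> | [-> | ->]] by lia; assumption.
Qed.

(* Below, [(x_k, y_k, z_k)] are the coordinates on [b c d] of the [k]-th vector of
   another superbase [(a', b', c', d')], so that [a'] has coordinates
   [-(x1 + x2 + x3)], [-(y1 + y2 + y3)], [-(z1 + z2 + z3)]. *)
Definition qform_columns_eq2 (x1 y1 z1 x2 y2 z2 x3 y3 z3 : Z) : bool :=
  [&& qform x1 x2 x3 =? 2, qform y1 y2 y3 =? 2, qform z1 z2 z3 =? 2,
      qform (x1 - y1) (x2 - y2) (x3 - y3) =? 2, qform (x1 - z1) (x2 - z2) (x3 - z3) =? 2
    & qform (y1 - z1) (y2 - z2) (y3 - z3) =? 2]%Z.

Definition signed_permutation_coeffs (x1 y1 z1 x2 y2 z2 x3 y3 z3 : Z) : bool :=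
  [&& superbase_coeffs (- (x1 + x2 + x3)) (- (y1 + y2 + y3)) (- (z1 + z2 + z3)),
      superbase_coeffs x1 y1 z1, superbase_coeffs x2 y2 z2 & superbase_coeffs x3 y3 z3]%Z ||
  [&& superbase_coeffs (x1 + x2 + x3) (y1 + y2 + y3) (z1 + z2 + z3),
      superbase_coeffs (- x1) (- y1) (- z1), superbase_coeffs (- x2) (- y2) (- z2)
    & superbase_coeffs (- x3) (- y3) (- z3)]%Z.

Lemma qform_columns_eq2_check :
  for_unit (fun x1 => for_unit (fun y1 => for_unit (fun z1 =>
  for_unit (fun x2 => for_unit (fun y2 => for_unit (fun z2 =>
  for_unit (fun x3 => for_unit (fun y3 => for_unit (fun z3 =>
    implb (qform_columns_eq2 x1 y1 z1 x2 y2 z2 x3 y3 z3)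
          (signed_permutation_coeffs x1 y1 z1 x2 y2 z2 x3 y3 z3)))))))))) = true.
Proof. vm_compute. reflexivity. Qed.

Lemma qform_columns_eq2_signed_permutation x1 y1 z1 x2 y2 z2 x3 y3 z3 :
  qform_columns_eq2 x1 y1 z1 x2 y2 z2 x3 y3 z3 = true ->
  signed_permutation_coeffs x1 y1 z1 x2 y2 z2 x3 y3 z3 = true.
Proof.
  intro H. pose proof H as Hq. unfold qform_columns_eq2 in Hq.
  rewrite !andb_true_iff !Z.eqb_eq in Hq.
  destruct Hq as [Q1 [Q2 [Q3 _]]].
  destruct (qform_eq2_bound _ _ _ Q1) as [B1 [B2 B3]].
  destruct (qform_eq2_bound _ _ _ Q2) as [B4 [B5 B6]].
  destruct (qform_eq2_bound _ _ _ Q3) as [B7 [B8 B9]].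
  pose proof qform_columns_eq2_check as C.
  apply (for_unitP _ x1) in C; [|exact B1]. apply (for_unitP _ y1) in C; [|exact B4].
  apply (for_unitP _ z1) in C; [|exact B7]. apply (for_unitP _ x2) in C; [|exact B2].
  apply (for_unitP _ y2) in C; [|exact B5]. apply (for_unitP _ z2) in C; [|exact B8].
  apply (for_unitP _ x3) in C; [|exact B3]. apply (for_unitP _ y3) in C; [|exact B6].
  apply (for_unitP _ z3) in C; [|exact B9].
  rewrite H in C. exact C.
Qed.

Lemma superbase4_coordinates b1 b2 b3 a b c d a' b' c' d' :
  det3 b1 b2 b3 <> 0 -> superbase4 b1 b2 b3 a b c d -> superbase4 b1 b2 b3 a' b' c' d' ->
  exists x1 y1 z1 x2 y2 z2 x3 y3 z3 : Z,
    b' = comb b c d (IZR x1) (IZR y1) (IZR z1) /\ c' = comb b c d (IZR x2) (IZR y2) (IZR z2) /\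
    d' = comb b c d (IZR x3) (IZR y3) (IZR z3) /\ detZ x1 y1 z1 x2 y2 z2 x3 y3 z3 <> 0%Z.
Proof.
  intros Hd [HL _] HS'.
  assert (Hd' := superbase4_det _ _ _ _ _ _ _ Hd HS').
  destruct (superbase4_in_lattice _ _ _ _ _ _ _ HS') as [_ [Lb [Lc Ld]]].
  destruct (proj1 (HL b') Lb) as [x1 [y1 [z1 Eb]]].
  destruct (proj1 (HL c') Lc) as [x2 [y2 [z2 Ec]]].
  destruct (proj1 (HL d') Ld) as [x3 [y3 [z3 Ed]]].
  exists x1, y1, z1, x2, y2, z2, x3, y3, z3. repeat split; try assumption.
  intro E. apply Hd'. rewrite Eb Ec Ed. fold (comb b c d). rewrite det3_comb E. ring.
Qed.

Lemma sqnorm_sum_comb_ge a b c d (x1 y1 z1 x2 y2 z2 x3 y3 z3 : Z) :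
  a = vopp (vadd b (vadd c d)) -> strictly_obtuse4 a b c d ->
  detZ x1 y1 z1 x2 y2 z2 x3 y3 z3 <> 0%Z ->
  let b' := comb b c d (IZR x1) (IZR y1) (IZR z1) in
  let c' := comb b c d (IZR x2) (IZR y2) (IZR z2) in
  let d' := comb b c d (IZR x3) (IZR y3) (IZR z3) in
  let a' := vopp (vadd b' (vadd c' d')) in
  sqnorm_sum a b c d <= sqnorm_sum a' b' c' d' /\
  (sqnorm_sum a' b' c' d' = sqnorm_sum a b c d ->
   qform_columns_eq2 x1 y1 z1 x2 y2 z2 x3 y3 z3 = true).
Proof.
  intros Ha HP Hdet b' c' d' a'.
  unfold a'. rewrite (sqnorm_sum_conorms _ _ _ _ Ha) (sqnorm_sum_comb _ _ _ _ _ _ _ _ _ _ _ _ _ Ha).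
  destruct (qform_columns_ge2 _ _ _ _ _ _ _ _ _ Hdet) as [G1 [G2 [G3 [G4 [G5 G6]]]]].
  apply IZR_le in G1, G2, G3, G4, G5, G6.
  destruct HP as [P1 [P2 [P3 [P4 [P5 P6]]]]].
  pose proof (Rmult_le_compat_l _ _ _ (Rlt_le _ _ P1) G1).
  pose proof (Rmult_le_compat_l _ _ _ (Rlt_le _ _ P2) G2).
  pose proof (Rmult_le_compat_l _ _ _ (Rlt_le _ _ P3) G3).
  pose proof (Rmult_le_compat_l _ _ _ (Rlt_le _ _ P4) G4).
  pose proof (Rmult_le_compat_l _ _ _ (Rlt_le _ _ P5) G5).
  pose proof (Rmult_le_compat_l _ _ _ (Rlt_le _ _ P6) G6).
  split; [lra | intro Heq].
  (* Equality forces every [qform] to take its minimal value 2. *)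
  assert (Hmin2 : forall p q, 0 < p -> p * IZR q = p * IZR 2 -> q = 2%Z)
    by (intros p q Hp E; apply eq_IZR, (Rmult_eq_reg_l p); [exact E | lra]).
  assert (W1 : qform x1 x2 x3 = 2%Z) by (apply (Hmin2 _ _ P1); lra).
  assert (W2 : qform y1 y2 y3 = 2%Z) by (apply (Hmin2 _ _ P2); lra).
  assert (W3 : qform z1 z2 z3 = 2%Z) by (apply (Hmin2 _ _ P3); lra).
  assert (W4 : qform (x1 - y1) (x2 - y2) (x3 - y3) = 2%Z) by (apply (Hmin2 _ _ P4); lra).
  assert (W5 : qform (x1 - z1) (x2 - z2) (x3 - z3) = 2%Z) by (apply (Hmin2 _ _ P5); lra).
  assert (W6 : qform (y1 - z1) (y2 - z2) (y3 - z3) = 2%Z) by (apply (Hmin2 _ _ P6); lra).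
  unfold qform_columns_eq2. rewrite W1 W2 W3 W4 W5 W6. reflexivity.
Qed.

Lemma signed_permutation_incl a b c d (x1 y1 z1 x2 y2 z2 x3 y3 z3 : Z) :
  a = vopp (vadd b (vadd c d)) ->
  signed_permutation_coeffs x1 y1 z1 x2 y2 z2 x3 y3 z3 = true ->
  let b' := comb b c d (IZR x1) (IZR y1) (IZR z1) in
  let c' := comb b c d (IZR x2) (IZR y2) (IZR z2) in
  let d' := comb b c d (IZR x3) (IZR y3) (IZR z3) in
  let a' := vopp (vadd b' (vadd c' d')) in
  incl [:: a'; b'; c'; d'] [:: a; b; c; d] \/
  incl [:: a'; b'; c'; d'] [:: vopp a; vopp b; vopp c; vopp d].
Proof.
  intros Ha Hq b' c' d' a'.
  assert (Ea : a' = comb b c d (IZR (- (x1 + x2 + x3))) (IZR (- (y1 + y2 + y3)))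
                      (IZR (- (z1 + z2 + z3))))
    by (unfold a', b', c', d'; push_IZR; vector_ring).
  unfold signed_permutation_coeffs in Hq. rewrite !orb_true_iff !andb_true_iff in Hq.
  destruct Hq as [[K0 [K1 [K2 K3]]] | [K0 [K1 [K2 K3]]]]; [left | right];
    intros x Hx; simpl in Hx; decompose [or] Hx; try subst x; try contradiction;
    try rewrite Ea; try (apply superbase_coeffs_in; assumption);
    apply superbase_coeffs_in_opp; try assumption.
  rewrite !Z.opp_involutive. assumption.
Qed.

Lemma strictly_obtuse_superbase4_min b1 b2 b3 a b c d a' b' c' d' :
  det3 b1 b2 b3 <> 0 -> superbase4 b1 b2 b3 a b c d -> strictly_obtuse4 a b c d ->
  superbase4 b1 b2 b3 a' b' c' d' ->
  sqnorm_sum a b c d <= sqnorm_sum a' b' c' d' /\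
  (sqnorm_sum a' b' c' d' = sqnorm_sum a b c d ->
   incl [:: a'; b'; c'; d'] [:: a; b; c; d] \/
   incl [:: a'; b'; c'; d'] [:: vopp a; vopp b; vopp c; vopp d]).
Proof.
  intros Hd HS HP HS'.
  destruct (superbase4_coordinates _ _ _ _ _ _ _ _ _ _ _ Hd HS HS')
    as [x1 [y1 [z1 [x2 [y2 [z2 [x3 [y3 [z3 [Eb [Ec [Ed Hdet]]]]]]]]]]]].
  destruct HS as [_ Ha]. destruct HS' as [_ Ha']. subst a' b' c' d'.
  destruct (sqnorm_sum_comb_ge _ _ _ _ _ _ _ _ _ _ _ _ _ Ha HP Hdet) as [Hle Heq].
  split; [exact Hle | intro E].
  apply signed_permutation_incl; [exact Ha | apply qform_columns_eq2_signed_permutation, Heq, E].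
Qed.

(** * Indexed superbases *)

Lemma ord4_cases (i : 'I_4) : i = i0 \/ i = i1 \/ i = i2 \/ i = i3.
Proof.
  destruct i as [[|[|[|[|n]]]] Hi];
    [left | right; left | right; right; left | right; right; right | discriminate Hi];
    apply val_inj; reflexivity.
Qed.

Definition superbase_of4 (a b c d : V3) : 'I_4 -> V3 :=
  fun i => match nat_of_ord i with 0 => a | 1 => b | 2 => c | _ => d end.

Lemma obtuseE v : obtuse v <-> obtuse4 (v i0) (v i1) (v i2) (v i3).
Proof.
  unfold obtuse, conorm. split.
  - intro H. repeat split; apply H; reflexivity.
  - intros [H1 [H2 [H3 [H4 [H5 H6]]]]] i j Hij.
    destruct (ord4_cases i) as [-> | [-> | [-> | ->]]];
    destruct (ord4_cases j) as [-> | [-> | [-> | ->]]];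
    try discriminate Hij; rewrite ?(dotC (v i1) (v i0)) ?(dotC (v i2) (v i0))
      ?(dotC (v i3) (v i0)) ?(dotC (v i2) (v i1)) ?(dotC (v i3) (v i1)) ?(dotC (v i3) (v i2));
    assumption.
Qed.

Lemma obtuse_superbase_opp b1 b2 b3 v :
  obtuse_superbase b1 b2 b3 v -> obtuse_superbase b1 b2 b3 (neg_sb v).
Proof.
  intros [HS HO]. split; [exact (superbase4_opp _ _ _ _ _ _ _ HS)|].
  intros i j Hij. unfold conorm, neg_sb. rewrite dotNl dotNr Ropp_involutive. apply HO, Hij.
Qed.

Lemma superbase_injective b1 b2 b3 v : det3 b1 b2 b3 <> 0 -> superbase b1 b2 b3 v ->
  forall i j, v i = v j -> i = j.
Proof.
  intros Hd HS i j.
  destruct (ord4_cases i) as [-> | [-> | [-> | ->]]];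
  destruct (ord4_cases j) as [-> | [-> | [-> | ->]]]; try (intros; reflexivity);
  intro E; exfalso; revert E;
  first [ superbase_neq Hd HS 1 (-1) 0 0 | superbase_neq Hd HS 1 0 (-1) 0
        | superbase_neq Hd HS 1 0 0 (-1) | superbase_neq Hd HS 0 1 (-1) 0
        | superbase_neq Hd HS 0 1 0 (-1) | superbase_neq Hd HS 0 0 1 (-1)
        | superbase_neq Hd HS (-1) 1 0 0 | superbase_neq Hd HS (-1) 0 1 0
        | superbase_neq Hd HS (-1) 0 0 1 | superbase_neq Hd HS 0 (-1) 1 0
        | superbase_neq Hd HS 0 (-1) 0 1 | superbase_neq Hd HS 0 0 (-1) 1 ].
Qed.

Lemma reordering_of_incl (v w : 'I_4 -> V3) : (forall i j, w i = w j -> i = j) ->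
  incl [:: w i0; w i1; w i2; w i3] [:: v i0; v i1; v i2; v i3] -> reordering v w.
Proof.
  intros Hinj Hincl.
  assert (H : forall i, exists j, w i = v j).
  { intro i. assert (Hi : In (w i) [:: v i0; v i1; v i2; v i3]).
    { apply Hincl. destruct (ord4_cases i) as [-> | [-> | [-> | ->]]]; simpl; tauto. }
    simpl in Hi. decompose [or] Hi; [exists i0 | exists i1 | exists i2 | exists i3 | contradiction];
      symmetry; assumption. }
  destruct (choice _ H) as [f Hf].
  assert (finj : injective f) by (intros i j E; apply Hinj; rewrite !Hf E; reflexivity).
  exists (perm finj). intro i. rewrite permE. apply Hf.
Qed.

Lemma not_reordering_opp b1 b2 b3 v : det3 b1 b2 b3 <> 0 -> superbase b1 b2 b3 v ->
  ~ reordering v (neg_sb v).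
Proof.
  intros Hd HS [s Hs]. specialize (Hs i0). unfold neg_sb in Hs. revert Hs.
  destruct (ord4_cases (s i0)) as [-> | [-> | [-> | ->]]];
    [ superbase_neq Hd HS (-2) 0 0 0 | superbase_neq Hd HS (-1) (-1) 0 0
    | superbase_neq Hd HS (-1) 0 (-1) 0 | superbase_neq Hd HS (-1) 0 0 (-1) ].
Qed.

Lemma obtuse_superbase_unique b1 b2 b3 v w :
  det3 b1 b2 b3 <> 0 -> voronoi_type_V1 b1 b2 b3 ->
  obtuse_superbase b1 b2 b3 v -> obtuse_superbase b1 b2 b3 w ->
  reordering v w \/ reordering (neg_sb v) w.
Proof.
  intros Hd HV [HSv HOv] [HSw HOw]. apply obtuseE in HOv, HOw.
  pose proof (V1_strictly_obtuse _ _ _ _ _ _ _ Hd HV HSv HOv) as HPv.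
  pose proof (V1_strictly_obtuse _ _ _ _ _ _ _ Hd HV HSw HOw) as HPw.
  destruct (strictly_obtuse_superbase4_min _ _ _ _ _ _ _ _ _ _ _ Hd HSv HPv HSw) as [Hle Heq].
  destruct (strictly_obtuse_superbase4_min _ _ _ _ _ _ _ _ _ _ _ Hd HSw HPw HSv) as [Hge _].
  destruct (Heq (Rle_antisym _ _ Hge Hle)) as [H | H]; [left | right];
    (apply reordering_of_incl; [exact (superbase_injective _ _ _ _ Hd HSw) | exact H]).
Qed.

Lemma reordering_conorm v w : reordering v w ->
  exists s : {perm 'I_4}, forall i j, conorm w i j = conorm v (s i) (s j).
Proof. intros [s Hs]. exists s. intros i j. unfold conorm. rewrite !Hs. reflexivity. Qed.

Lemma conorm_neg_sb v i j : conorm (neg_sb v) i j = conorm v i j.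
Proof. unfold conorm, neg_sb. rewrite dotNl dotNr Ropp_involutive. reflexivity. Qed.

Theorem lemma4p1 (b1 b2 b3 : V3) :
  det3 b1 b2 b3 <> 0 ->
  voronoi_type_V1 b1 b2 b3 ->
  (* (a) exactly two obtuse superbases up to reordering, related by v |-> -v *)
  ((exists v, obtuse_superbase b1 b2 b3 v) /\
   forall v, obtuse_superbase b1 b2 b3 v ->
     obtuse_superbase b1 b2 b3 (neg_sb v) /\
     ~ reordering v (neg_sb v) /\
     forall w, obtuse_superbase b1 b2 b3 w ->
       reordering v w \/ reordering (neg_sb v) w) /\
  (* (b) coforms of any two obtuse superbases related by an index permutation *)
  (forall v w, obtuse_superbase b1 b2 b3 v -> obtuse_superbase b1 b2 b3 w ->
     exists s : {perm 'I_4}, forall i j : 'I_4, i != j ->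
       conorm w i j = conorm v (s i) (s j)).
Proof.
  intros Hd HV. split; [split|].
  - destruct (exists_obtuse_superbase4 _ _ _ Hd) as [a [b [c [d [HS HO]]]]].
    exists (superbase_of4 a b c d). split; [exact HS | apply obtuseE, HO].
  - intros v Hv. split; [|split].
    + exact (obtuse_superbase_opp _ _ _ _ Hv).
    + exact (not_reordering_opp _ _ _ _ Hd (proj1 Hv)).
    + intros w Hw. exact (obtuse_superbase_unique _ _ _ _ _ Hd HV Hv Hw).
  - intros v w Hv Hw.
    destruct (obtuse_superbase_unique _ _ _ _ _ Hd HV Hv Hw) as [H | H];
      destruct (reordering_conorm _ _ H) as [s Hs]; exists s; intros i j _;
      rewrite Hs ?conorm_neg_sb; reflexivity.
Qed.
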